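(* Let $S$ be a germ at $0\in\mathbb{C}^2$ which is a union of finitely many pairwise distinct germs of smooth curves, with desingularization of length $N\ge1$, and let $l$ be a germ of smooth curve at $0$ whose tangent line is distinct from the tangent lines of all branches of $S$ (so that $S\cup l$ has the same sequence of blow-ups $E_1,\dots,E_N$, the same $D_k$, parents, neighbours and proximity matrix $P$, with $\nu(S_1\cup l)=\nu(S_1)+1$, $n_1^{S\cup l}=n_1^S+1$, and $S_k$, $n_k$ unchanged for $k\ge2$). Then: (i) if $\Delta\in\{0,1\}^N$ with $\Delta_1=0$ is such that $\{\mathcal{E}(\Delta),\Delta\}$ is an admissible solution of $(\mathcal{H})$ for $S$, then the same $\Delta$ gives an admissible solution of $(\mathcal{H})$ for $S\cup l$; (ii) if $\nu(S)$ is odd and $\Delta\in\{0,1\}^N$ with $\Delta_1=1$ is such that $\{\mathcal{E}(\Delta),\Delta\}$ is an admissible solution of $(\mathcal{H})$ for $S$, then the same $\Delta$ gives an admissible solution of $(\mathcal{H})$ for $S\cup l$.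
   Context: Setup. Let $S$ be a germ at $0\in\mathbb{C}^2$ of reduced analytic curve. Its desingularization $E=E_1\circ\cdots\circ E_N$ is the sequence of point blow-ups defined as follows: $E_1$ is the blow-up of the origin $c_1=0$; then one successively blows up the points $c$ of the current exceptional divisor at which the germ of the strict transform of $S$ is non-empty and is not a single smooth branch transverse to the exceptional divisor at a regular (non-corner) point of it; the process stops when no such point remains. The blow-ups are numbered $E_1,\dots,E_N$ so that, for $k\ge 2$, $E_k$ is centered at a point $c_k$ of the exceptional divisor of $E_1\circ\cdots\circ E_{k-1}$. $D_k$ denotes the exceptional curve created by $E_k$ (and its strict transforms), and $D=E^{-1}(0)=D_1\cup\dots\cup D_N$. Set $S_1=S$ and, for $k\ge2$, let $S_k$ be the germ at $c_k$ of the strict transform of $S$ by $E_1\circ\cdots\circ E_{k-1}$. $\nu(\cdot)$ denotes the algebraic multiplicity of (a reduced equation of) a germ of curve. $n_k$ is the number of irreducible components of the final strict transform $E^\star S$ that meet $D_k$. The set of parents $\mathfrak{P}(k)$, for $k\ge 2$, is the set of indices $j<k$ such that $c_k$ lies on (the strict transform of) $D_j$; $\mathfrak{P}(1)=\emptyset$. The set of neighbours $\mathfrak{N}(k)$ is the set of $i\neq k$ with $D_i\cap D_k\neq\emptyset$ in the final divisor $D$. The proximity matrix $P=(P_{ij})_{1\le i,j\le N}$ has $P_{ii}=1$, $P_{ij}=-1$ if $i\in\mathfrak{P}(j)$, and $P_{ij}=0$ otherwise; it is invertible. The system $(\mathcal{H})$. For $\Delta\in\{0,1\}^N$ put $\delta_k=\#\{i\in\mathfrak{P}(k):\Delta_i=1\}$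 and $\mathfrak{S}_k(\Delta)=\frac{\nu(S_k)-\delta_k}{2}+\Delta_k$ if $\nu(S_k)-\delta_k$ is even, $\mathfrak{S}_k(\Delta)=\frac{\nu(S_k)-\delta_k}{2}+\frac12$ if odd. The system $(\mathcal{H})$ is $P^{-1}\mathcal{E}=\mathfrak{S}(\Delta)$, with unique solution $\mathcal{E}(\Delta)=P\,\mathfrak{S}(\Delta)\in\mathbb{Z}^N$. A pair $\{\mathcal{E},\Delta\}$ solving $(\mathcal{H})$ is admissible if for every $k$: $\Delta_k=1\Rightarrow\epsilon_k\ge n_k$, and $\Delta_k=0\Rightarrow\epsilon_k\ge 2-\sum_{i\in\mathfrak{N}(k)}\Delta_i$. All these quantities are computed for the curve under consideration ($S$ or $S\cup l$). *)

From HB Require Import structures.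
From mathcomp Require Import all_boot all_order all_algebra.
From mathcomp Require Import reals complex.
Set Implicit Arguments. Unset Strict Implicit. Unset Printing Implicit Defensive.
Import Order.TTheory GRing.Theory Num.Theory.
Local Open Scope ring_scope.

(* A smooth germ is given by its tangent direction  dir : option C           *)
(*   dir = Some a : the germ is  y = a x + sum_{i>=0} coef i * x^(i+2)        *)
(*   dir = None   : the germ is  x =       sum_{i>=0} coef i * y^(i+2)        *)
(* Every smooth germ at 0 has exactly one such representation, and two       *)
(* germs are equal iff their representations are equal.                      *)
Record sgerm (R : realType) := SGerm { dir : option R[i] ; coef : nat -> R[i] }.

(* Infinitely near points (of the origin) are encoded by the finite sequence *)
(* of affine chart coordinates of the successive centres: [::] is the        *)
(* origin c = 0; q ++ [:: x] is the point of the exceptional curve D_q       *)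
(* created by blowing up q with coordinate x (for |q| = 0, x : option C is   *)
(* a point of P^1; for |q| >= 1, Some a is the point of D_q with affine      *)
(* coordinate a in the chart not containing the previous divisor, and None  *)
(* would be the point at infinity of D_q, i.e. a satellite point).           *)
Definition point (R : realType) := seq (option R[i]).

(* labels of a germ: the successive coordinates of its infinitely near points *)
Definition glab (R : realType) (b : sgerm R) (i : nat) : option R[i] :=
  if i is i'.+1 then Some (coef b i') else dir b.

(* the infinitely near point of b of level m+1 (the origin has level 1) *)
Definition gpoint (R : realType) (b : sgerm R) (m : nat) : point R :=
  mkseq (glab b) m.

Definition passes (R : realType) (b : sgerm R) (p : point R) : bool :=
  p == gpoint b (size p).

Definition curve (R : realType) := seq (sgerm R).

Definition pairwise_distinct (R : realType) (S : curve R) : Prop :=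
  forall i j, (i < j < size S)%N ->
    nth (SGerm None (fun _ => 0%R)) S i <> nth (SGerm None (fun _ => 0%R)) S j.

(* multiplicity nu(S_p) of the germ at p of the strict transform of S: each  *)
(* strict transform of a smooth germ is smooth, so it is the number of      *)
(* germs through p.                                                          *)
Definition mult (R : realType) (S : curve R) (p : point R) : nat :=
  count (fun b => passes b p) S.

(* p is a centre of the desingularization of S: the origin is blown up as    *)
(* soon as S is non-empty; another (free) infinitely near point is blown up  *)
(* iff the strict transform of S there is not a single smooth branch         *)
(* transverse to the exceptional divisor at a regular point of it, i.e.      *)
(* (strict transforms of smooth germs being transverse to the last           *)
(* exceptional curve and passing only through free points) iff at least    *)
(* two germs of S pass through p.                                            *)
Definition blown (R : realType) (S : curve R) (p : point R) : bool :=
  if p is [::] then (0 < mult S p)%N else (1 < mult S p)%N.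

(* c : nat -> point is a numbering c_1, ..., c_N of the centres of the       *)
(* desingularization E = E_1 o ... o E_N of S.                               *)
Definition desing_numbering (R : realType) (S : curve R) (N : nat)
    (c : nat -> point R) : Prop :=
  [/\ c 1%N = [::],
      (forall k, (1 <= k <= N)%N -> blown S (c k)),
      (forall p, blown S p -> exists2 k, (1 <= k <= N)%N & c k = p),
      (forall k k', (1 <= k <= N)%N -> (1 <= k' <= N)%N -> c k = c k' -> k = k')
    & (forall k, (2 <= k <= N)%N ->
         exists2 j, (1 <= j < k)%N & c j = take (size (c k)).-1 (c k))].

(* i \in P(k): c_k lies on (the strict transform of) D_i, i < k.  All        *)
(* centres are free points, so c_k lies only on the curve D_i created by     *)
(* blowing up its immediate predecessor c_i.                                 *)
Definition parent (R : realType) (c : nat -> point R) (i k : nat) : bool :=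
  [&& (1 <= i < k)%N, (0 < size (c k))%N & c i == take (size (c k)).-1 (c k)].

(* i \in N(k): D_i meets D_k in the final divisor D (no satellite point is   *)
(* ever blown up, so this happens iff one centre is the predecessor of the   *)
(* other).                                                                   *)
Definition neighbour (R : realType) (N : nat) (c : nat -> point R) (i k : nat)
  : bool :=
  [&& (1 <= i <= N)%N, i != k & parent c i k || parent c k i].

(* n_k: number of branches of the final strict transform meeting D_k, i.e.   *)
(* branches through c_k whose next infinitely near point is not blown up.    *)
Definition nbr (R : realType) (S : curve R) (c : nat -> point R) (k : nat)
  : nat :=
  count (fun b => passes b (c k) && ~~ blown S (gpoint b (size (c k)).+1)) S.

(* proximity matrix, indices 1..N *)
Definition proxP (R : realType) (c : nat -> point R) (i j : nat) : rat :=
  if i == j then 1 else if parent c i j then -1 else 0.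

Definition deltaH (R : realType) (N : nat) (c : nat -> point R)
    (D : nat -> bool) (k : nat) : nat :=
  count (fun i => parent c i k && D i) (iota 1 N).

Definition frakS (R : realType) (S : curve R) (N : nat) (c : nat -> point R)
    (D : nat -> bool) (k : nat) : rat :=
  let d : int := (mult S (c k))%:Z - (deltaH N c D k)%:Z in
  if ~~ odd `|d|%N then d%:~R / 2 + (D k)%:R else d%:~R / 2 + 1 / 2.

(* E(Delta) = P frak S(Delta), the unique solution of P^-1 E = frak S(Delta) *)
Definition epsH (R : realType) (S : curve R) (N : nat) (c : nat -> point R)
    (D : nat -> bool) (k : nat) : rat :=
  \sum_(1 <= j < N.+1) proxP c k j * frakS S N c D j.

Definition admissible (R : realType) (S : curve R) (N : nat)
    (c : nat -> point R) (D : nat -> bool) : Prop :=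
  forall k, (1 <= k <= N)%N ->
    if D k then (nbr S c k)%:R <= epsH S N c D k
    else 2 - (\sum_(1 <= i < N.+1 | neighbour N c i k) (D i)%:R) <= epsH S N c D k.

(* Since l is transverse to every branch of S, it passes through no centre
   other than the origin c_1, and its strict transform meets D_1 at a point
   which is not blown up.  Hence the only data that change are nu(S_1) and
   n_1, both of which grow by one.  As the first column of the proximity
   matrix is the first unit vector, only epsilon_1 changes, by the increment
   of frak S_1; this increment is nonnegative when Delta_1 = 0, and equals 1
   (matching the new branch counted in n_1) when Delta_1 = 1 and nu(S) is
   odd. *)
From HB Require Import structures.
From mathcomp Require Import all_boot all_order all_algebra.
From mathcomp Require Import reals complex.
From mathcomp Require Import ring lra.
Import Order.TTheory GRing.Theory Num.Theory.

Set Implicit Arguments.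
Unset Strict Implicit.
Unset Printing Implicit Defensive.
Local Open Scope ring_scope.

Definition admissible_at (R : realType) (S : curve R) (N : nat)
    (c : nat -> point R) (D : nat -> bool) (k : nat) : Prop :=
  if D k then (nbr S c k)%:R <= epsH S N c D k
  else 2 - (\sum_(1 <= i < N.+1 | neighbour N c i k) (D i)%:R) <= epsH S N c D k.

Section ProximityData.
Variables (R : realType) (N : nat) (c : nat -> point R).

Lemma proxP_col1 k : proxP c k 1 = (k == 1)%:R.
Proof. by case: k => [|[|k]]. Qed.

Lemma deltaH1 D : deltaH N c D 1 = 0%N.
Proof. by rewrite /deltaH (eq_count (a2 := pred0)) ?count_pred0 // => -[|[|i]]. Qed.

Lemma frakS1 (S : curve R) D :
  frakS S N c D 1 = if odd (mult S (c 1)) then (mult S (c 1))%:R / 2 + 1 / 2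
                    else (mult S (c 1))%:R / 2 + (D 1%N)%:R.
Proof. by rewrite /frakS deltaH1 subr0 absz_nat pmulrn; case: odd. Qed.

End ProximityData.

Section AddBranch.
Variables (R : realType) (S : curve R) (l : sgerm R).

Lemma mult_rcons p : mult (rcons S l) p = (mult S p + passes l p)%N.
Proof. by rewrite /mult -cats1 count_cat /= addn0. Qed.

Lemma mult_rcons_origin : mult (rcons S l) [::] = (mult S [::]).+1.
Proof. by rewrite mult_rcons addn1. Qed.

Hypothesis transverse : forall i, (i < size S)%N -> dir (nth l S i) <> dir l.

Lemma mult_eq0_passes p : (0 < size p)%N -> passes l p -> mult S p = 0%N.
Proof.
move=> p_gt0 /eqP l_p; apply/eqP; rewrite eqn0Ngt -has_count.
apply/(has_nthP l) => -[i ltiS /eqP bp]; apply: (transverse ltiS).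
have := congr1 (nth None ^~ 0%N) bp.
by rewrite {1}l_p /gpoint !nth_mkseq ?size_mkseq.
Qed.

Lemma blown_rcons p : (0 < size p)%N -> blown (rcons S l) p = blown S p.
Proof.
case: p => [//|x q] p_gt0 /=; rewrite mult_rcons.
case l_xq: (passes l (x :: q)); last by rewrite addn0.
by rewrite mult_eq0_passes.
Qed.

Lemma nbr_rcons c k : nbr (rcons S l) c k =
  (nbr S c k + (passes l (c k) && ~~ blown S (gpoint l (size (c k)).+1)))%N.
Proof.
rewrite /nbr (eq_count (a2 := fun b =>
  passes b (c k) && ~~ blown S (gpoint b (size (c k)).+1))).
  by rewrite -cats1 count_cat /= addn0.
by move=> b; rewrite blown_rcons // size_mkseq.
Qed.

Lemma nbr_rcons_origin c : c 1%N = [::] -> nbr (rcons S l) c 1 = (nbr S c 1).+1.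
Proof.
move=> c1; rewrite nbr_rcons c1 /= /blown.
have l_p : passes l (gpoint l 1) by rewrite /passes size_mkseq.
by rewrite (mult_eq0_passes _ l_p) ?size_mkseq // addn1.
Qed.

Variables (N : nat) (c : nat -> point R).
Hypothesis N_gt0 : (0 < N)%N.
Hypothesis desingS : desing_numbering S N c.

Lemma centre_neq_origin k : (2 <= k <= N)%N -> c k != [::].
Proof.
case: desingS => c1 _ _ c_inj _ /andP[k_gt1 k_leN].
have k_range : (1 <= k <= N)%N by rewrite k_leN ltnW.
by apply: contraTneq k_gt1; rewrite -c1 => /c_inj ->.
Qed.

Lemma passes_centre k : (2 <= k <= N)%N -> passes l (c k) = false.
Proof.
move=> k_range; have [_ blownS _ _ _] := desingS.
have /blownS : (1 <= k <= N)%N by case/andP: k_range => /ltnW -> ->.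
case: (c k) (centre_neq_origin k_range) => [|x q] //= _.
by apply: contraTF => l_p; rewrite mult_eq0_passes.
Qed.

Lemma mult_rcons_centre k : (2 <= k <= N)%N -> mult (rcons S l) (c k) = mult S (c k).
Proof. by move=> k_range; rewrite mult_rcons passes_centre ?addn0. Qed.

Lemma nbr_rcons_centre k : (2 <= k <= N)%N -> nbr (rcons S l) c k = nbr S c k.
Proof. by move=> k_range; rewrite nbr_rcons passes_centre ?addn0. Qed.

Lemma epsH_rcons D k : epsH (rcons S l) N c D k =
  epsH S N c D k + (k == 1)%:R * (frakS (rcons S l) N c D 1 - frakS S N c D 1).
Proof.
rewrite /epsH !(big_ltn (m := 1%N)) ?ltnS // proxP_col1.
rewrite (eq_big_nat _ _ (F2 := fun j => proxP c k j * frakS S N c D j)); first by ring.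
by move=> j j_range; rewrite /frakS mult_rcons_centre.
Qed.

Lemma epsH_rcons_origin D : epsH (rcons S l) N c D 1 =
  epsH S N c D 1 + (frakS (rcons S l) N c D 1 - frakS S N c D 1).
Proof. by rewrite epsH_rcons eqxx mul1r. Qed.

Lemma admissible_at_rcons_centre D k :
  (2 <= k <= N)%N -> admissible_at (rcons S l) N c D k = admissible_at S N c D k.
Proof.
move=> k_range; have k_neq1 : k != 1%N by case/andP: k_range; case: k => [|[]].
by rewrite /admissible_at epsH_rcons (negPf k_neq1) mul0r addr0 nbr_rcons_centre.
Qed.

Lemma admissible_rcons D :
  (admissible_at S N c D 1 -> admissible_at (rcons S l) N c D 1) ->
  admissible S N c D -> admissible (rcons S l) N c D.
Proof.
move=> adm1 admS k /andP[k_gt0 k_leN]; have [->|k_neq1] := eqVneq k 1%N.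
  by apply: adm1; apply: admS.
have k_range : (2 <= k <= N)%N by rewrite k_leN andbT ltn_neqAle eq_sym k_neq1.
change (admissible_at (rcons S l) N c D k).
by rewrite admissible_at_rcons_centre //; apply: admS; rewrite k_gt0.
Qed.

Lemma frakS_rcons_origin_ge D :
  D 1%N = false -> frakS S N c D 1 <= frakS (rcons S l) N c D 1.
Proof.
case: desingS => c1 _ _ _ _ D1.
rewrite !frakS1 c1 mult_rcons_origin D1 oddS -[(mult S [::]).+1%:R]natr1.
by case: odd => /=; lra.
Qed.

Lemma frakS_rcons_origin_odd D : odd (mult S [::]) -> D 1%N = true ->
  frakS (rcons S l) N c D 1 = frakS S N c D 1 + 1.
Proof.
case: desingS => c1 _ _ _ _ odd_multS D1.
rewrite !frakS1 c1 mult_rcons_origin D1 oddS odd_multS -[(mult S [::]).+1%:R]natr1 /=.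
by field.
Qed.

Lemma admissible_at_rcons_origin_false D : D 1%N = false ->
  admissible_at S N c D 1 -> admissible_at (rcons S l) N c D 1.
Proof.
move=> D1; rewrite /admissible_at D1 epsH_rcons_origin => /le_trans; apply.
by rewrite lerDl subr_ge0 frakS_rcons_origin_ge.
Qed.

Lemma admissible_at_rcons_origin_odd D : odd (mult S [::]) -> D 1%N = true ->
  admissible_at S N c D 1 -> admissible_at (rcons S l) N c D 1.
Proof.
case: (desingS) => c1 _ _ _ _ odd_multS D1.
rewrite /admissible_at D1 epsH_rcons_origin frakS_rcons_origin_odd //.
by rewrite nbr_rcons_origin // -natr1 addrAC subrr add0r lerD2r.
Qed.

End AddBranch.

Theorem lemma2 (R : realType) (S : curve R) (l : sgerm R) (N : nat)
    (c : nat -> point R) :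
  pairwise_distinct S ->
  (1 <= N)%N ->
  desing_numbering S N c ->
  (forall i, (i < size S)%N -> dir (nth l S i) <> dir l) ->
  (forall D : nat -> bool, D 1%N = false ->
     admissible S N c D -> admissible (rcons S l) N c D) /\
  (forall D : nat -> bool, odd (mult S ([::] : point R)) -> D 1%N = true ->
     admissible S N c D -> admissible (rcons S l) N c D).
Proof.
(* Distinctness of the branches of S is not needed. *)
move=> _ N_gt0 desingS transverse; split=> D.
- move=> D1; apply: admissible_rcons => //.
  exact: admissible_at_rcons_origin_false.
- move=> odd_multS D1; apply: admissible_rcons => //.
  exact: admissible_at_rcons_origin_odd.
Qed.
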